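(* Suppose $\beta_j\ne0$ for $j=2,3,\dots,k$ in the Lanczos process. Then the optimal value $\mu^{(k)}$ of rLGopt satisfies $\mu^{(k)}<\lambda_{\min}(T_k)$, and rLGopt cannot fall into the hard case.
   Context: Let $M\in\mathbb{R}^{n\times n}$ be symmetric (in the paper $M=PAP$) and $0\ne b_0\in\mathbb{R}^n$, $\gamma>0$. Lanczos process: $q_0=0$, $\beta_1=\|b_0\|$, $q_1=b_0/\|b_0\|$, for $j=1,2,\dots$: $\alpha_j=q_j^{\top}Mq_j$, $\widehat q_{j+1}=Mq_j-\alpha_jq_j-\beta_jq_{j-1}$, $\beta_{j+1}=\|\widehat q_{j+1}\|$, $q_{j+1}=\widehat q_{j+1}/\beta_{j+1}$ when $\beta_{j+1}>0$. $T_k$ is the $k\times k$ symmetric tridiagonal matrix with diagonal $\alpha_1,\dots,\alpha_k$ and off-diagonal entries $\beta_2,\dots,\beta_k$. rLGopt: minimize $\lambda$ over $(\lambda,x)\in\mathbb{R}\times\mathbb{R}^k$ with $(T_k-\lambda I)x=-\|b_0\|e_1$ and $\|x\|=\gamma$; $\mu^{(k)}$ is its optimal value. The associated rQEPmin: minimize $\lambda$ over $\lambda\in\mathbb{R}$, $0\ne w\in\mathbb{R}^k$ with $(T_k-\lambda I)^2w=\gamma^{-2}\|b_0\|^2e_1e_1^{\top}w$. rLGopt is said to be in the hard case if rQEPmin has a minimizer $(\lambda,w)$ with $e_1^{\top}w=0$. *)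

From HB Require Import structures.
From mathcomp Require Import all_boot all_order all_algebra.
From mathcomp Require Import boolp classical_sets reals.
Set Implicit Arguments. Unset Strict Implicit. Unset Printing Implicit Defensive.
Import Order.TTheory GRing.Theory Num.Theory.
Local Open Scope ring_scope.
Local Open Scope classical_set_scope.

Section Lanczos.
Variable R : realType.

Definition vnorm (m : nat) (v : 'cV[R]_m) : R :=
  Num.sqrt (\sum_(i < m) v i 0 ^+ 2).

Definition e1 (k : nat) : 'cV[R]_k := \col_(i < k) ((i == 0 :> nat)%:R).

Variables (n : nat) (M : 'M[R]_n) (b0 : 'cV[R]_n).

(* lanczos_state m = (q_{m}, q_{m+1}, beta_{m+1}), with q_0 = 0,
   q_1 = b0/||b0||, beta_1 = ||b0||.  When beta_{j+1} = 0 the vector q_{j+1}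
   is set to 0 (0^-1 = 0 in MathComp); it is never used under the theorem's
   hypotheses. *)
Fixpoint lanczos_state (m : nat) : 'cV[R]_n * 'cV[R]_n * R :=
  match m with
  | 0 => (0, (vnorm b0)^-1 *: b0, vnorm b0)
  | m'.+1 =>
      let: (qp, q, b) := lanczos_state m' in
      let a := (q^T *m M *m q) 0 0 in
      let qh := M *m q - a *: q - b *: qp in
      let b' := vnorm qh in
      (q, b'^-1 *: qh, b')
  end.

Definition lanczos_q (j : nat) : 'cV[R]_n := (lanczos_state j.-1).1.2.
Definition lanczos_beta (j : nat) : R := (lanczos_state j.-1).2.
Definition lanczos_alpha (j : nat) : R :=
  ((lanczos_q j)^T *m M *m lanczos_q j) 0 0.

(* T_k : k x k symmetric tridiagonal, diagonal alpha_1..alpha_k,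
   off-diagonal beta_2..beta_k (0-based entry (i,i+1) is beta_{i+2}). *)
Definition lanczos_T (k : nat) : 'M[R]_k :=
  \matrix_(i < k, j < k)
    (if i == j :> nat then lanczos_alpha i.+1
     else if j == i.+1 :> nat then lanczos_beta j.+1
     else if i == j.+1 :> nat then lanczos_beta i.+1
     else 0).

End Lanczos.

Section Problems.
Variable R : realType.
Variables (k : nat) (T : 'M[R]_k) (nb gamma : R).
(* nb plays the role of ||b_0|| *)

Definition rLG_feasible (l : R) (x : 'cV[R]_k) : Prop :=
  (T - l%:M) *m x = - (nb *: e1 R k) /\ vnorm x = gamma.

Definition rLG_opt : R := inf [set l : R | exists x, rLG_feasible l x].

Definition rQEP_feasible (l : R) (w : 'cV[R]_k) : Prop :=
  w != 0 /\
  (T - l%:M) *m (T - l%:M) *m w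
    = (gamma ^- 2 * nb ^+ 2) *: (e1 R k *m (e1 R k)^T *m w).

Definition rQEP_minimizer (l : R) (w : 'cV[R]_k) : Prop :=
  rQEP_feasible l w /\ forall l' w', rQEP_feasible l' w' -> l <= l'.

Definition rLG_hard_case : Prop :=
  exists l w, rQEP_minimizer l w /\ ((e1 R k)^T *m w) 0 0 = 0.

End Problems.

Definition lambda_min (R : realType) (k : nat) (T : 'M[R]_k) : R :=
  inf [set a : R | eigenvalue T a].

From HB Require Import structures.
From mathcomp Require Import all_boot all_order all_algebra.
From mathcomp Require Import boolp classical_sets reals.
From mathcomp Require Import polyrcf complex.
From mathcomp Require Import ring lra zify.
Set Implicit Arguments. Unset Strict Implicit. Unset Printing Implicit Defensive.
Import Order.TTheory GRing.Theory Num.Theory.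
Local Open Scope ring_scope.

(* T := T_k is symmetric tridiagonal with nonzero off-diagonal
   entries.  When l is not an eigenvalue, the rLG equation has the unique
   solution x(l) = ||b0|| / chi(l) * adj(l - T) e1, where chi is the
   characteristic polynomial, so the sign of ||x(l)||^2 - gamma^2 is that of
   the polynomial G(l) = ||b0||^2 ||adj(l - T) e1||^2 - gamma^2 chi(l)^2.
   Far to the left of the spectrum x(l) is short, so G < 0 there.  At the
   smallest eigenvalue theta, chi vanishes while the last entry of
   adj(theta - T) e1 is, up to sign, the product of the beta_j, so
   G(theta) > 0.  The intermediate value theorem gives a feasible l < theta.
   For the hard case: (T - l)^2 w = 0 forces (T - l) w = 0 since T is
   symmetric, and by the nonzero off-diagonal an eigenvector of T with first
   entry 0 vanishes. *)

Lemma symmetric_eigenvalue_exists (R : rcfType) (k : nat) (T : 'M[R]_k.+1) :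
  T^T = T -> exists a, eigenvalue T a.
Proof.
move=> Tsym; pose Tc := map_mx (real_complex R) T.
have Tc_herm : Tc \is hermsymmx.
  apply: realsym_hermsym.
    by apply/is_hermitianmxP; rewrite scale1r map_mx_id // map_trmx Tsym.
  by apply/mxOverP => i j; rewrite mxE; apply/complex_realP; exists (T i j).
have /orthomx_spectralP TcE := hermitian_normalmx Tc_herm.
set P := spectralmx Tc in TcE; set d := spectral_diag Tc in TcE.
have /complex_realP [r dr] : d 0 0 \is Num.real.
  exact: (mxOverP (hermitian_spectral_diag_real Tc_herm)).
exists r; rewrite eigenvalue_root_char -(fmorph_root (real_complex R)).
rewrite map_char_poly -eigenvalue_root_char -/Tc; apply/eigenvalueP.
exists (delta_mx 0 0 *m P).
  have e0_diag : (delta_mx 0 0 : 'rV_k.+1) *m diag_mx d = d 0 0 *: delta_mx 0 0.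
    by rewrite -rowE row_diag_mx.
  by rewrite TcE !mulmxA mulmxK ?spectral_unit // e0_diag -scalemxAl dr.
rewrite mulmx_free_eq0 ?row_free_unit ?spectral_unit //.
by apply/negP => /eqP/rowP/(_ 0)/eqP; rewrite !mxE eqxx oner_eq0.
Qed.

Lemma horner_char_poly_mx (F : fieldType) (n : nat) (A : 'M[F]_n) (l : F) :
  map_mx (horner_eval l) (char_poly_mx A) = l%:M - A.
Proof.
apply/matrixP => i j.
by rewrite !mxE /horner_eval hornerD hornerN hornerC hornerMn hornerX.
Qed.

Lemma eigenvalue_det (F : fieldType) (n : nat) (A : 'M[F]_n) (l : F) :
  eigenvalue A l = (\det (l%:M - A) == 0).
Proof.
by rewrite eigenvalue_root_char /root -horner_evalE -det_map_mx horner_char_poly_mx.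
Qed.

Lemma exists_min_eigenvalue (R : rcfType) (k : nat) (T : 'M[R]_k.+1) :
  T^T = T -> exists2 a, eigenvalue T a & forall b, eigenvalue T b -> a <= b.
Proof.
move=> /symmetric_eigenvalue_exists [a0 Ta0]; set p := char_poly T.
have eigenvalue_rootsR b : eigenvalue T b = (b \in rootsR p).
  by rewrite -roots_on_rootsR ?monic_neq0 ?char_poly_monic // eigenvalue_root_char.
move: Ta0 (sorted_roots (- cauchy_bound p) (cauchy_bound p) p).
rewrite -/(rootsR p) eigenvalue_rootsR.
case: (rootsR p) eigenvalue_rootsR => [//|a s] eig_as _ /=.
move=> /(order_path_min lt_trans)/allP a_min.
exists a => [|b]; rewrite eig_as ?mem_head // in_cons.
by case/orP => [/eqP -> //|/a_min /ltW].
Qed.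

Section SquaredNorm.
Variables (R : realDomainType) (m : nat).
Implicit Types (v : 'cV[R]_m).

Definition sqnorm v : R := \sum_i v i 0 ^+ 2.

Lemma sqnorm_ge0 v : 0 <= sqnorm v.
Proof. by apply: sumr_ge0 => i _; rewrite sqr_ge0. Qed.

Lemma ler_sqnorm v i : v i 0 ^+ 2 <= sqnorm v.
Proof.
by rewrite /sqnorm (bigD1 i) //= lerDl sumr_ge0 // => t _; rewrite sqr_ge0.
Qed.

Lemma sqnorm_eq0 v : (sqnorm v == 0) = (v == 0).
Proof.
apply/eqP/eqP => [v0|->]; last by rewrite /sqnorm big1 // => i _; rewrite mxE expr0n.
apply/matrixP => i j; rewrite ord1 mxE; apply/eqP; rewrite -sqrf_eq0; apply/eqP.
by apply: (psumr_eq0P _ v0) => // t _; rewrite sqr_ge0.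
Qed.

Lemma sqnormZ a v : sqnorm (a *: v) = a ^+ 2 * sqnorm v.
Proof. by rewrite /sqnorm mulr_sumr; apply: eq_bigr => i _; rewrite mxE exprMn. Qed.

Lemma sqnormE v : (v^T *m v) 0 0 = sqnorm v.
Proof. by rewrite mxE; apply: eq_bigr => i _; rewrite mxE expr2. Qed.

Lemma symmetric_mulmx_sqr_eq0 (A : 'M[R]_m) v :
  A^T = A -> A *m A *m v = 0 -> A *m v = 0.
Proof.
move=> Asym AAv0; apply/eqP; rewrite -sqnorm_eq0 -sqnormE trmx_mul Asym.
by rewrite -mulmxA (mulmxA A) AAv0 mulmx0 mxE.
Qed.

End SquaredNorm.

Lemma vnorm_sqr (R : realType) (m : nat) (v : 'cV[R]_m) : vnorm v ^+ 2 = sqnorm v.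
Proof. exact/sqr_sqrtr/sqnorm_ge0. Qed.

Lemma vnorm_gt0 (R : realType) (m : nat) (v : 'cV[R]_m) : v != 0 -> 0 < vnorm v.
Proof. by move=> v_neq0; rewrite sqrtr_gt0 lt_def sqnorm_eq0 v_neq0 sqnorm_ge0. Qed.

Section QuadraticForm.
Variables (R : realFieldType) (m : nat) (A : 'M[R]_m).

Definition entry_abs_sum : R := \sum_i \sum_j `|A i j|.

Lemma abs_quadform_le (v : 'cV[R]_m) :
  `|(v^T *m A *m v) 0 0| <= entry_abs_sum * sqnorm v.
Proof.
have -> : (v^T *m A *m v) 0 0 = \sum_i \sum_j v i 0 * A i j * v j 0.
  rewrite mxE exchange_big; apply: eq_bigr => j _; rewrite mxE mulr_suml.
  by apply: eq_bigr => i _; rewrite mxE.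
rewrite mulr_suml (le_trans (ler_norm_sum _ _ _)) // ler_sum // => i _.
rewrite mulr_suml (le_trans (ler_norm_sum _ _ _)) // ler_sum // => j _.
have abs_mul_le (x y s : R) : x ^+ 2 <= s -> y ^+ 2 <= s -> `|x * y| <= s.
  have := sqr_ge0 (x - y); have := sqr_ge0 (x + y).
  by rewrite ler_norml => *; apply/andP; split; nra.
by rewrite !normrM mulrAC mulrC ler_wpM2l // -normrM abs_mul_le ?ler_sqnorm.
Qed.

Lemma symmetric_eigenvalue_ge (a : R) :
  A^T = A -> eigenvalue A a -> - entry_abs_sum <= a.
Proof.
move=> Asym /eigenvalueP [u uA u_neq0].
have Au : A *m u^T = a *: u^T by rewrite -[A]Asym -trmx_mul uA linearZ.
have u_gt0 : 0 < sqnorm u^T.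
  by rewrite lt_def sqnorm_eq0 trmx_eq0 u_neq0 sqnorm_ge0.
have := abs_quadform_le u^T; rewrite -mulmxA Au -scalemxAr mxE sqnormE.
by rewrite ler_norml => /andP [+ _]; rewrite -mulNr ler_pM2r.
Qed.

End QuadraticForm.

Lemma mulmx_e1 (R : realType) (n m : nat) (A : 'M[R]_(n, m.+1)) (i : 'I_n) :
  (A *m e1 R m.+1) i 0 = A i ord0.
Proof.
by rewrite mxE big_ord_recl big1 => [|j _]; rewrite mxE /= ?mulr1 ?addr0 // mulr0.
Qed.

Lemma trmx_mulmx_e1 (R : realType) (m : nat) (v : 'cV[R]_m.+1) :
  (v^T *m e1 R m.+1) 0 0 = v ord0 0.
Proof. by rewrite mulmx_e1 mxE. Qed.

Lemma e1_trmx_mulmx (R : realType) (m : nat) (v : 'cV[R]_m.+1) :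
  ((e1 R m.+1)^T *m v) 0 0 = v ord0 0.
Proof. by rewrite -[v in LHS]trmxK -trmx_mul mxE trmx_mulmx_e1. Qed.

Lemma subr_scalar_mx_offdiag (R : pzRingType) (n : nat) (A : 'M[R]_n) (l : R)
    (i j : 'I_n) :
  i != j :> nat -> (A - l%:M) i j = A i j.
Proof. by move=> ne_ij; rewrite !mxE -val_eqE (negbTE ne_ij) mulr0n subr0. Qed.

Lemma unreduced_hessenberg_ker (F : fieldType) (k : nat) (A : 'M[F]_k.+1)
    (v : 'cV[F]_k.+1) :
  (forall i j : 'I_k.+1, (i.+1 < j)%N -> A i j = 0) ->
  (forall i j : 'I_k.+1, j = i.+1 :> nat -> A i j != 0) ->
  A *m v = 0 -> v ord0 0 = 0 -> v = 0.
Proof.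
move=> A_band A_superdiag Av0 v00.
suff vi0 m (i : 'I_k.+1) : (i <= m)%N -> v i 0 = 0.
  by apply/matrixP => i j; rewrite ord1 mxE (vi0 i i).
elim: m i => [|m IH] i le_im.
  by rewrite (_ : i = ord0) //; apply/val_inj => /=; lia.
case: (ltnP i m.+1) => [lt_im|ge_im]; first exact: IH.
have i_eq : i = m.+1 :> nat by lia.
have lt_mk : (m < k.+1)%N by have := ltn_ord i; lia.
have /matrixP/(_ (Ordinal lt_mk) 0) := Av0.
rewrite !mxE (bigD1 i) //= big1 => [|t ne_ti].
  rewrite addr0 => /eqP; rewrite mulf_eq0 => /orP [|/eqP //].
  by rewrite (negbTE (A_superdiag (Ordinal lt_mk) _ i_eq)).
have [le_tm|lt_mt] := leqP t m; first by rewrite IH ?mulr0.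
by rewrite A_band ?mul0r //=; move: ne_ti; rewrite -val_eqE /=; lia.
Qed.

Section UnreducedTridiagonal.
Variables (F : fieldType) (k : nat) (T : 'M[F]_k.+1).
Hypothesis T_sym : T^T = T.
Hypothesis T_band : forall i j : 'I_k.+1, (i.+1 < j)%N -> T i j = 0.
Hypothesis T_superdiag : forall i j : 'I_k.+1, j = i.+1 :> nat -> T i j != 0.

Lemma eigenvector_head_neq0 (l : F) (v : 'cV[F]_k.+1) :
  (T - l%:M) *m v = 0 -> v != 0 -> v ord0 0 != 0.
Proof.
move=> Tv0; apply: contraNneq => v00; apply/eqP.
apply: unreduced_hessenberg_ker Tv0 v00 => i j ij; rewrite subr_scalar_mx_offdiag.
- exact: T_band.
- lia.
- exact: T_superdiag.
- lia.
Qed.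

Lemma adj_shift_last_neq0 (l : F) : \adj (l%:M - T) ord_max ord0 != 0.
Proof.
have lift_neq (a b : 'I_k) : (a <= b)%N -> (lift ord0 b == lift ord_max a) = false.
  move=> le_ab; apply/negbTE/eqP => /(congr1 (@nat_of_ord _)).
  by rewrite lift0 lift_max; lia.
(* The minor without row 0 and the last column is triangular, with the
   subdiagonal [- T (i+1) i] of [l%:M - T] as its diagonal. *)
rewrite mxE /cofactor mulf_neq0 ?signr_eq0 // -det_tr det_trig; last first.
  apply/is_trig_mxP => a b lt_ab; rewrite !mxE lift_neq 1?ltnW // sub0r.
  by rewrite -T_sym mxE T_band ?oppr0 // lift0 lift_max.
apply/prodf_neq0 => a _; rewrite !mxE lift_neq // sub0r oppr_eq0 -T_sym mxE.
by apply: T_superdiag; rewrite lift0 lift_max.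
Qed.

End UnreducedTridiagonal.

Section RLGEquation.
Variables (R : realType) (k : nat) (T : 'M[R]_k.+1) (nb g : R).

Lemma rLG_eq_quadform (l : R) (x : 'cV[R]_k.+1) :
  (T - l%:M) *m x = - (nb *: e1 R k.+1) ->
  (x^T *m T *m x) 0 0 - l * sqnorm x = - nb * x ord0 0.
Proof.
move=> /(congr1 (fun y => (x^T *m y) 0 0)).
rewrite mulmxA mulmxBr mulmxBl mul_mx_scalar -scalemxAl mulmxN -scalemxAr.
by rewrite -sqnormE -trmx_mulmx_e1 !mxE mulNr.
Qed.

Lemma rLG_eq_sqnorm_lt (l : R) (x : 'cV[R]_k.+1) :
  0 < nb -> 0 < g -> (T - l%:M) *m x = - (nb *: e1 R k.+1) ->
  l < - entry_abs_sum T - nb - nb / g ^+ 2 -> sqnorm x < g ^+ 2.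
Proof.
move=> nb_gt0 g_gt0 /rLG_eq_quadform quad l_lt.
rewrite ltNge; apply/negP => s_ge.
have := abs_quadform_le T x; rewrite ler_norml => /andP [quad_ge _].
have s_ge0 := sqnorm_ge0 x; have a_le := ler_sqnorm x ord0.
set s := sqnorm x in quad quad_ge s_ge s_ge0 a_le *.
set q : R := (x^T *m T *m x) 0 0 in quad quad_ge.
set a : R := x ord0 0 in quad a_le; set K := entry_abs_sum T in quad_ge l_lt.
set c := nb / g ^+ 2 in l_lt.
have c_s : nb <= c * s.
  by rewrite /c mulrAC ler_pdivlMr ?exprn_gt0 // ler_wpM2l // ltW.
have a_ge : - a <= (1 + s) / 2 by have := sqr_ge0 (a + 1); lra.
have := ler_wpM2l (ltW nb_gt0) a_ge; have := mulr_ge0 (ltW nb_gt0) s_ge0.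
have : 0 <= (- l - (K + nb + c)) * s by rewrite mulr_ge0 // subr_ge0; lra.
lra.
Qed.

Lemma rLG_feasible_ge (l : R) (x : 'cV[R]_k.+1) : 0 < nb -> 0 < g ->
  rLG_feasible T nb g l x -> - entry_abs_sum T - nb - nb / g ^+ 2 <= l.
Proof.
move=> nb_gt0 g_gt0 [x_sol x_norm]; rewrite leNgt; apply/negP.
move=> /(rLG_eq_sqnorm_lt nb_gt0 g_gt0 x_sol).
by rewrite -x_norm vnorm_sqr ltxx.
Qed.

Definition adj_e1 (l : R) : 'cV[R]_k.+1 := \adj (l%:M - T) *m e1 R k.+1.

Definition rLG_sol (l : R) : 'cV[R]_k.+1 := (nb / \det (l%:M - T)) *: adj_e1 l.

(* Clears the denominator chi(l)^2 of [sqnorm (rLG_sol l) - g ^+ 2], see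
   [horner_secular_poly_sol]. *)
Definition secular_poly : {poly R} :=
  nb ^+ 2 *: \sum_i (\adj (char_poly_mx T) *m map_mx polyC (e1 R k.+1)) i 0 ^+ 2
  - g ^+ 2 *: char_poly T ^+ 2.

Lemma mulmx_adj_e1 (l : R) :
  (T - l%:M) *m adj_e1 l = - (\det (l%:M - T) *: e1 R k.+1).
Proof. by rewrite /adj_e1 -opprB mulNmx mulmxA mul_mx_adj mul_scalar_mx. Qed.

Lemma rLG_solP (l : R) : \det (l%:M - T) != 0 ->
  (T - l%:M) *m rLG_sol l = - (nb *: e1 R k.+1).
Proof. by move=> det_neq0; rewrite -scalemxAr mulmx_adj_e1 scalerN scalerA divfK. Qed.

Lemma horner_secular_poly (l : R) :
  secular_poly.[l] = nb ^+ 2 * sqnorm (adj_e1 l) - g ^+ 2 * \det (l%:M - T) ^+ 2.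
Proof.
have adj_e1_eval : map_mx (horner_eval l)
    (\adj (char_poly_mx T) *m map_mx polyC (e1 R k.+1)) = adj_e1 l.
  rewrite map_mxM map_mx_adj horner_char_poly_mx -map_mx_comp map_mx_id //.
  by move=> c /=; rewrite horner_evalE hornerC.
rewrite /secular_poly hornerD hornerN !hornerZ horner_exp horner_sum.
rewrite -horner_evalE -det_map_mx horner_char_poly_mx; congr (_ * _ - _).
by apply: eq_bigr => i _; rewrite horner_exp -adj_e1_eval [in RHS]mxE.
Qed.

Lemma horner_secular_poly_sol (l : R) : \det (l%:M - T) != 0 ->
  secular_poly.[l] = (sqnorm (rLG_sol l) - g ^+ 2) * \det (l%:M - T) ^+ 2.
Proof.
by move=> det_neq0; rewrite horner_secular_poly sqnormZ expr_div_n; field.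
Qed.

End RLGEquation.

Section UnreducedSecularEquation.
Variables (R : realType) (k : nat) (T : 'M[R]_k.+1) (nb g : R).
Hypothesis T_sym : T^T = T.
Hypothesis T_band : forall i j : 'I_k.+1, (i.+1 < j)%N -> T i j = 0.
Hypothesis T_superdiag : forall i j : 'I_k.+1, j = i.+1 :> nat -> T i j != 0.

Lemma adj_e1_neq0 (l : R) : adj_e1 T l != 0.
Proof.
apply: contraNneq (adj_shift_last_neq0 T_sym T_band T_superdiag l) => adj_e1_0.
by rewrite -mulmx_e1 -/(adj_e1 T l) adj_e1_0 mxE.
Qed.

Lemma rLG_feasible_lt_min_eigenvalue (th : R) : 0 < nb -> 0 < g ->
  eigenvalue T th -> (forall b, eigenvalue T b -> th <= b) ->
  exists2 l, l < th & exists x, rLG_feasible T nb g l x.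
Proof.
move=> nb_gt0 g_gt0 Tth th_min.
have det_neq0 l : l < th -> \det (l%:M - T) != 0.
  by move=> lt_l; rewrite -eigenvalue_det; apply/negP => /th_min; rewrite leNgt lt_l.
pose L := - entry_abs_sum T - nb - nb / g ^+ 2 - 1.
have L_lt : L < th.
  have := symmetric_eigenvalue_ge T_sym Tth.
  have : 0 < nb / g ^+ 2 by rewrite divr_gt0 ?exprn_gt0.
  rewrite /L; lra.
have sec_L : (secular_poly T nb g).[L] < 0.
  rewrite horner_secular_poly_sol ?det_neq0 // pmulr_llt0 ?subr_lt0.
    apply: rLG_eq_sqnorm_lt nb_gt0 g_gt0 (rLG_solP nb (det_neq0 _ L_lt)) _.
    rewrite /L; lra.
  by rewrite exprn_even_gt0 // det_neq0.
have sec_th : 0 < (secular_poly T nb g).[th].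
  rewrite horner_secular_poly (eqP (_ : \det (th%:M - T) == 0)) -?eigenvalue_det //.
  rewrite expr0n mulr0 subr0 mulr_gt0 ?exprn_gt0 //.
  by rewrite lt_def sqnorm_eq0 adj_e1_neq0 sqnorm_ge0.
have sec_sign : (secular_poly T nb g).[L] <= 0 <= (secular_poly T nb g).[th].
  by rewrite !ltW.
have [l0 /andP [_ l0_le] l0_root] := poly_ivt (ltW L_lt) sec_sign.
have l0_lt : l0 < th.
  rewrite lt_def l0_le andbT; apply: contraTneq l0_root => <-.
  by rewrite /root gt_eqF.
exists l0 => //; exists (rLG_sol T nb l0); split; first exact/rLG_solP/det_neq0.
move: l0_root; rewrite /root horner_secular_poly_sol ?det_neq0 //.
rewrite mulf_eq0 expf_eq0 /= (negbTE (det_neq0 _ l0_lt)) orbF subr_eq0 => /eqP sq.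
by rewrite /vnorm -/(sqnorm (rLG_sol T nb l0)) sq sqrtr_sqr gtr0_norm.
Qed.

Lemma rLG_opt_lt_lambda_min : 0 < nb -> 0 < g -> rLG_opt T nb g < lambda_min T.
Proof.
move=> nb_gt0 g_gt0; have [th Tth th_min] := exists_min_eigenvalue T_sym.
have [l l_lt [x x_feas]] := rLG_feasible_lt_min_eigenvalue nb_gt0 g_gt0 Tth th_min.
apply: (le_lt_trans _ (lt_le_trans l_lt _)).
  (* [inf] of a set without lower bound is 0, hence [rLG_feasible_ge]. *)
  apply: ge_inf; last by exists x.
  exists (- entry_abs_sum T - nb - nb / g ^+ 2) => l' [x'].
  exact: rLG_feasible_ge.
by apply: lb_le_inf; [exists th | exact: th_min].
Qed.

Lemma not_rLG_hard_case : ~ rLG_hard_case T nb g.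
Proof.
move=> [l [w [[[w_neq0 Tw] _] e1w0]]].
have e1w : (e1 R k.+1)^T *m w = 0 by apply/matrixP => i j; rewrite !ord1 e1w0 mxE.
have Tl_sym : (T - l%:M)^T = T - l%:M by rewrite linearB /= T_sym tr_scalar_mx.
have Tlw : (T - l%:M) *m w = 0.
  by apply: symmetric_mulmx_sqr_eq0 Tl_sym _; rewrite Tw -mulmxA e1w mulmx0 scaler0.
have := eigenvector_head_neq0 T_band T_superdiag Tlw w_neq0.
by rewrite -e1_trmx_mulmx e1w0 eqxx.
Qed.

End UnreducedSecularEquation.

Section LanczosMatrix.
Variables (R : realType) (n : nat) (M : 'M[R]_n) (b0 : 'cV[R]_n) (k : nat).

Lemma lanczos_T_sym : (lanczos_T M b0 k)^T = lanczos_T M b0 k.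
Proof.
apply/matrixP => i j; rewrite !mxE.
have [-> | ne_ji] := eqVneq (j : nat) i; first by [].
have [ij | ] := eqVneq (i : nat) j.+1; have [ji | ] := eqVneq (j : nat) i.+1 => //.
lia.
Qed.

Lemma lanczos_T_band (i j : 'I_k) : (i.+1 < j)%N -> lanczos_T M b0 k i j = 0.
Proof. by move=> lt_ij; rewrite mxE !ifF //; apply/eqP; lia. Qed.

Lemma lanczos_T_superdiag (i j : 'I_k) :
  j = i.+1 :> nat -> lanczos_T M b0 k i j = lanczos_beta M b0 j.+1.
Proof. by move=> ji; rewrite mxE ifF ji ?eqxx //; apply/eqP; lia. Qed.

End LanczosMatrix.

Theorem theorem3p1 (R : realType) (n : nat) (M : 'M[R]_n) (b0 : 'cV[R]_n)
    (gamma : R) (k : nat) :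
  M^T = M -> b0 != 0 -> 0 < gamma -> (0 < k)%N ->
  (forall j : nat, (2 <= j <= k)%N -> lanczos_beta M b0 j != 0) ->
  rLG_opt (lanczos_T M b0 k) (vnorm b0) gamma < lambda_min (lanczos_T M b0 k)
  /\ ~ rLG_hard_case (lanczos_T M b0 k) (vnorm b0) gamma.
Proof.
move=> _ b0_neq0 gamma_gt0 k_gt0 beta_neq0.
case: k k_gt0 beta_neq0 => [//|k] _ beta_neq0.
have T_superdiag (i j : 'I_k.+1) : j = i.+1 :> nat -> lanczos_T M b0 k.+1 i j != 0.
  move=> ji; rewrite lanczos_T_superdiag //; apply: beta_neq0.
  by apply/andP; split; have := ltn_ord j; lia.
have T_band := @lanczos_T_band R n M b0 k.+1.
have T_sym := lanczos_T_sym M b0 k.+1.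
split; last exact: not_rLG_hard_case T_sym T_band T_superdiag.
exact: rLG_opt_lt_lambda_min T_sym T_band T_superdiag (vnorm_gt0 b0_neq0) gamma_gt0.
Qed.
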